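(* For any finite alphabet $\mathfrak{G}$, the hook series of $(\mathbf{S}_\bullet(\mathfrak{G}), \mathbf{V})$ satisfies $\langle\mathfrak{t},\mathbf{H}_\mathbf{V}\rangle = \tilde{h}(\mathfrak{t})$ for any $\mathfrak{G}$-tree $\mathfrak{t}$.
   Context: $\mathfrak{G}$ is a finite alphabet (letters with arities $\geq 1$). A $\mathfrak{G}$-tree is either the leaf (the tree with no internal node) or $\mathtt{a}[\mathfrak{s}_1,\dots,\mathfrak{s}_{|\mathtt{a}|}]$, a root decorated by $\mathtt{a}\in\mathfrak{G}$ with children $\mathfrak{s}_1,\dots,\mathfrak{s}_{|\mathtt{a}|}$; $\deg$ counts internal nodes. $\mathbf{S}_\bullet(\mathfrak{G})$ is the set of $\mathfrak{G}$-trees graded by degree. $\mathbf{V}$ is the adjoint (trees being orthonormal) of the linear map $\mathbf{V}^\star$ defined by: $\mathbf{V}^\star$ of the leaf is $0$; $\mathbf{V}^\star(\mathtt{a}[\mathfrak{s},\text{leaf},\dots,\text{leaf}]) = \mathfrak{s}$; and $\mathbf{V}^\star(\mathtt{a}[\mathfrak{s}_1,\dots,\mathfrak{s}_{|\mathtt{a}|}]) = \sum_{j\in[2,|\mathtt{a}|]}\mathtt{a}[\mathfrak{s}_1,\dots,\mathfrak{s}_{j-1},\mathbf{V}^\star(\mathfrak{s}_j),\mathfrak{s}_{j+1},\dots,\mathfrak{s}_{|\mathtt{a}|}]$ when some $\mathfrak{s}_j$, $j\geq 2$, is not the leaf. This graded graph has the leaf as root, and its hook series $\mathbf{H}_\mathbf{V}$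 is defined by $\langle x,\mathbf{H}_\mathbf{V}\rangle = [x=\text{the leaf}] + \langle\mathbf{V}^\star(x),\mathbf{H}_\mathbf{V}\rangle$ (equivalently, the number of paths from the leaf to $x$). The statistic $\tilde{h}$ is defined by $\tilde{h}(\text{leaf}) = 1$ and $\tilde{h}(\mathtt{a}[\mathfrak{s}_1,\dots,\mathfrak{s}_{|\mathtt{a}|}]) = \frac{(\deg(\mathfrak{s}_2)+\cdots+\deg(\mathfrak{s}_{|\mathtt{a}|}))!}{\deg(\mathfrak{s}_2)!\cdots\deg(\mathfrak{s}_{|\mathtt{a}|})!}\prod_{i\in[|\mathtt{a}|]}\tilde{h}(\mathfrak{s}_i)$; it equals the number of linear extensions of the twisted poset on the internal nodes of $\mathfrak{t}$ in which $u\leq' v$ iff $u=v$, or $v$ is a descendant of $u$ not lying in the first subtree of $u$, or $u$ lies in the first subtree of $v$. *)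

From mathcomp Require Import all_boot.
Set Implicit Arguments. Unset Strict Implicit. Unset Printing Implicit Defensive.

(* G-trees over an alphabet of letters of type G (a finType in the theorem);
   arities are given by a separate function [ar]; a tree is well formed when
   every node labelled a has exactly [ar a] children. *)
Inductive tree (G : Type) : Type :=
| Leaf : tree G
| Node : G -> seq (tree G) -> tree G.
Arguments Leaf {G}.

Section Trees.
Variable G : Type.

Definition is_leaf (t : tree G) : bool := if t is Leaf then true else false.

Fixpoint wf (ar : G -> nat) (t : tree G) : bool :=
  match t with
  | Leaf => true
  | Node a ch => (size ch == ar a) && all (wf ar) ch
  end.

Fixpoint deg (t : tree G) : nat :=
  match t with
  | Leaf => 0
  | Node _ ch => (sumn (map deg ch)).+1
  end.

(* V^star, returned as a formal sum of trees with multiplicities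
   (a list of trees; each occurrence counts with coefficient 1). *)
Fixpoint Vstar (t : tree G) : seq (tree G) :=
  match t with
  | Leaf => [::]
  | Node a ch =>
      match ch with
      | [::] => [::]
      | s1 :: rest =>
          if all is_leaf rest then [:: s1] else
          (fix go (pre : seq (tree G)) (l : seq (tree G)) : seq (tree G) :=
             match l with
             | [::] => [::]
             | s :: l' =>
                 [seq Node a (s1 :: pre ++ y :: l') | y <- Vstar s]
                   ++ go (rcons pre s) l'
             end) [::] rest
      end
  end.

(* <x, H_V> = [x = leaf] + <V^star x, H_V>; V^star lowers the degree by one,
   so recursion with fuel deg x computes it. *)
Fixpoint hookF (n : nat) (t : tree G) : nat :=
  match n with
  | 0 => is_leaf t
  | n'.+1 => is_leaf t + sumn (map (hookF n') (Vstar t))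
  end.

Definition hook (t : tree G) : nat := hookF (deg t) t.

Fixpoint htilde (t : tree G) : nat :=
  match t with
  | Leaf => 1
  | Node _ ch =>
      let rest := behead ch in
      ((sumn (map deg rest))`! %/ foldr muln 1 (map (fun s => (deg s)`!) rest))
        * foldr muln 1 (map htilde ch)
  end.

End Trees.

From mathcomp Require Import all_boot.
From mathcomp Require Import ring.
Set Implicit Arguments. Unset Strict Implicit. Unset Printing Implicit Defensive.

(* Both sides take the value 1 at the leaf and satisfy f t = sum_(y in V^star t) f y
   at every internal node t: for the hook series this is its definition.  For
   t = a[s_1, ..., s_k] with d_j = deg s_j, V^star removes one node from one of
   s_2, ..., s_k (or returns s_1 when these are all leaves), so by induction
   (h~ s_j = sum_(y in V^star s_j) h~ y) the recursion for h~ reduces to the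
   Pascal-type recurrence of multinomial coefficients
     (d_2 + ... + d_k)! / prod_j d_j! = sum_j d_j (d_2 + ... + d_k - 1)! / prod_j d_j!.
   The arities must be positive: a nullary letter a has hook a[] = 0 but h~ a[] = 1. *)

Lemma eq_big_all (R : Type) {idx : R} {op : R -> R -> R} (I : Type)
    (p : pred I) (r : seq I) (F1 F2 : I -> R) :
  all p r -> (forall i, p i -> F1 i = F2 i) ->
  \big[op/idx]_(i <- r) F1 i = \big[op/idx]_(i <- r) F2 i.
Proof. by move=> /all_filterP <- eqF; rewrite !big_filter; apply: eq_bigr. Qed.

Lemma all_In (T : Type) (p : pred T) (l : seq T) x : all p l -> List.In x l -> p x.
Proof. by elim: l => //= y l IH /andP[p_y p_l] [<- // | /(IH p_l)]. Qed.

Lemma dvdn_prod_fact_sum (I : Type) (r : seq I) (F : I -> nat) :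
  \prod_(i <- r) (F i)`! %| (\sum_(i <- r) F i)`!.
Proof.
elim: r => [|i r IH]; rewrite ?big_nil ?big_cons //.
rewrite -(bin_fact (leq_addr (\sum_(j <- r) F j) (F i))) addKn.
by apply: dvdn_mull; rewrite dvdn_mul.
Qed.

Section Trees.
Variable G : Type.
Implicit Types (a : G) (t s y : tree G) (l pre rest : seq (tree G)).

Definition tree_ind_in (P : tree G -> Prop) (P_leaf : P Leaf)
    (P_node : forall a ch, (forall s, List.In s ch -> P s) -> P (Node a ch)) :
    forall t, P t :=
  fix IH t := match t with
  | Leaf => P_leaf
  | Node a ch => P_node a ch
      ((fix IHch (l : seq (tree G)) : forall s, List.In s l -> P s :=
          match l with
          | [::] => fun s in_nil => False_ind _ in_nil
          | s' :: l' => fun s in_s => match in_s with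
              | or_introl eq_s => eq_ind s' P (IH s') s eq_s
              | or_intror in_l' => IHch l' s in_l'
              end
          end) ch)
  end.

Lemma big_all_leaf (R : Type) (idx : R) (op : Monoid.law idx) (F : tree G -> R) l :
  all (@is_leaf G) l -> F Leaf = idx -> \big[op/idx]_(s <- l) F s = idx.
Proof. by move=> /all_filterP <- F_leaf; rewrite big_filter big1 // => -[]. Qed.

Lemma sum_deg_gt0 l : ~~ all (@is_leaf G) l -> 0 < \sum_(s <- l) deg s.
Proof. by elim: l => [|[|b ch] l IH] //=; rewrite big_cons. Qed.

(* The inner fixpoint of [Vstar]: V^star applied to each child of [l], where
   [pre] holds the children between the first one [s1] and [l]. *)
Fixpoint Vstar_tail a s1 pre l : seq (tree G) :=
  match l with
  | [::] => [::]
  | s :: l' => [seq Node a (s1 :: pre ++ y :: l') | y <- Vstar s]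
                 ++ Vstar_tail a s1 (rcons pre s) l'
  end.

Lemma Vstar_nodeE a s1 rest : Vstar (Node a (s1 :: rest)) =
  if all (@is_leaf G) rest then [:: s1] else Vstar_tail a s1 [::] rest.
Proof.
rewrite /=; case: ifP => // _; generalize (@nil (tree G)) at 2 3.
by elim: rest => [|s l IH] pre //=; rewrite IH.
Qed.

Lemma deg_Vstar_tail a s1 pre l :
  (forall s, List.In s l -> all (fun y => (deg y).+1 == deg s) (Vstar s)) ->
  all (fun y => (deg y).+1 == deg (Node a (s1 :: pre ++ l))) (Vstar_tail a s1 pre l).
Proof.
elim: l pre => [|s l IH] pre deg_l //.
rewrite [Vstar_tail _ _ _ _]/= all_cat; apply/andP; split.
  rewrite all_map; apply: sub_all (deg_l s (or_introl erefl)) => y /eqP deg_y /=.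
  by rewrite !map_cat !sumn_cat /= -deg_y !addnS.
by rewrite -cat_rcons; apply: IH => s' in_s'; apply: deg_l; right.
Qed.

Lemma deg_Vstar t : all (fun y => (deg y).+1 == deg t) (Vstar t).
Proof.
elim/tree_ind_in: t => // a [//|s1 rest] deg_ch; rewrite Vstar_nodeE.
case: ifP => [leaves|_]; last by apply: deg_Vstar_tail => s in_s; apply: deg_ch; right.
by rewrite /= andbT sumnE big_map big_all_leaf ?addn0.
Qed.

Lemma htilde_nodeE a s1 rest : htilde (Node a (s1 :: rest)) =
  (\sum_(s <- rest) deg s)`! %/ \prod_(s <- rest) (deg s)`!
  * (htilde s1 * \prod_(s <- rest) htilde s).
Proof. by rewrite /= sumnE !foldrE !big_map. Qed.

Lemma htilde_node_mul a s1 rest :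
  htilde (Node a (s1 :: rest)) * \prod_(s <- rest) (deg s)`! =
  (\sum_(s <- rest) deg s)`! * (htilde s1 * \prod_(s <- rest) htilde s).
Proof. by rewrite htilde_nodeE mulnAC divnK ?dvdn_prod_fact_sum. Qed.

Lemma htilde_lower_child a s1 pre y s l : deg s = (deg y).+1 ->
  htilde (Node a (s1 :: pre ++ y :: l)) * \prod_(x <- pre ++ s :: l) (deg x)`! =
  deg s * (\sum_(x <- pre ++ y :: l) deg x)`!
  * (htilde s1 * \prod_(x <- pre ++ y :: l) htilde x).
Proof.
move=> deg_s.
have -> : \prod_(x <- pre ++ s :: l) (deg x)`! =
          deg s * \prod_(x <- pre ++ y :: l) (deg x)`!.
  by rewrite !big_cat !big_cons deg_s factS /=; ring.
by rewrite mulnCA htilde_node_mul mulnA.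
Qed.

Lemma sum_htilde_Vstar_tail a s1 pre l :
  (forall s, List.In s l -> ~~ is_leaf s -> \sum_(y <- Vstar s) htilde y = htilde s) ->
  (\sum_(y <- Vstar_tail a s1 pre l) htilde y) * \prod_(s <- pre ++ l) (deg s)`! =
  (\sum_(s <- l) deg s) * (\sum_(s <- pre ++ l) deg s).-1`!
  * (htilde s1 * \prod_(s <- pre ++ l) htilde s).
Proof.
elim: l pre => [|s l IH] pre sum_l /=; first by rewrite !big_nil.
rewrite big_cat mulnDl -cat_rcons IH => [|s' in_s']; last by apply: sum_l; right.
rewrite cat_rcons big_cons 2!mulnDl; congr (_ + _).
case: s sum_l => [|b ch] sum_l; first by rewrite big_nil.
move: (sum_l _ (or_introl erefl) isT); set s := Node b ch => sum_s; clearbody s.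
set D := \sum_(x <- pre ++ s :: l) deg x.
have lower_s y : (deg y).+1 == deg s ->
    htilde (Node a (s1 :: pre ++ y :: l)) * \prod_(x <- pre ++ s :: l) (deg x)`! =
    deg s * D.-1`! * (htilde s1 * \prod_(x <- pre) htilde x
                      * \prod_(x <- l) htilde x) * htilde y.
  move=> /eqP deg_y; rewrite htilde_lower_child //.
  have -> : \sum_(x <- pre ++ y :: l) deg x = D.-1.
    by rewrite /D !big_cat !big_cons /= -deg_y addSn addnS.
  by rewrite big_cat big_cons /=; ring.
rewrite big_map big_distrl (eq_big_all (deg_Vstar s) lower_s) -big_distrr.
by rewrite sum_s !big_cat big_cons /=; ring.
Qed.

Variable ar : G -> nat.
Hypothesis ar_pos : forall a, 0 < ar a.

Lemma wf_Vstar_tail a s1 pre l :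
  (forall s, List.In s l -> wf ar s -> all (wf ar) (Vstar s)) ->
  wf ar (Node a (s1 :: pre ++ l)) -> all (wf ar) (Vstar_tail a s1 pre l).
Proof.
elim: l pre => [|s l IH] pre wf_l wf_node //.
rewrite [Vstar_tail _ _ _ _]/= all_cat; apply/andP; split.
  move: wf_node => /= /andP[/eqP size_ch /andP[wf_s1]].
  rewrite all_cat /= => /and3P[wf_pre wf_s wf_l'].
  rewrite all_map; apply: sub_all (wf_l s (or_introl erefl) wf_s) => y wf_y /=.
  by rewrite -size_ch !size_cat /= eqxx wf_s1 all_cat wf_pre /= wf_y wf_l'.
by apply: IH; [move=> s' in_s'; apply: wf_l; right | rewrite cat_rcons].
Qed.

Lemma wf_Vstar t : wf ar t -> all (wf ar) (Vstar t).
Proof.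
elim/tree_ind_in: t => // a [//|s1 rest] wf_ch wf_t; rewrite Vstar_nodeE.
case: ifP => _; first by case/and3P: wf_t => _ wf_s1 _; rewrite /= andbT.
by apply: wf_Vstar_tail => // s in_s; apply: wf_ch; right.
Qed.

Lemma sum_htilde_Vstar t :
  wf ar t -> ~~ is_leaf t -> \sum_(y <- Vstar t) htilde y = htilde t.
Proof.
elim/tree_ind_in: t => // a ch IH /andP[/eqP size_ch wf_ch] _.
case: ch size_ch wf_ch IH => [|s1 rest] size_ch wf_ch IH.
  by have := ar_pos a; rewrite -size_ch.
rewrite Vstar_nodeE; case: ifP => leaves.
  by rewrite htilde_nodeE big_seq1 !big_all_leaf // divn1 muln1 mul1n.
have D_gt0 := sum_deg_gt0 (negbT leaves).
have fact_prod_gt0 : 0 < \prod_(s <- rest) (deg s)`! := prodn_gt0 (fun s => fact_gt0 _).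
apply/eqP; rewrite -(eqn_pmul2r fact_prod_gt0); apply/eqP.
rewrite (sum_htilde_Vstar_tail _ _ [::]) => [|s in_s]; last first.
  by apply: IH; [right | case/andP: wf_ch => _ wf_rest; apply: all_In wf_rest in_s].
by rewrite htilde_node_mul -[in RHS](prednK D_gt0) factS prednK.
Qed.

Lemma hookF_htilde n t : wf ar t -> deg t <= n -> hookF n t = htilde t.
Proof.
elim: n t => [|n IHn] t wf_t deg_t; first by case: t wf_t deg_t.
have -> : hookF n.+1 t = is_leaf t + sumn (map (hookF n) (Vstar t)) by [].
case: t wf_t deg_t => [//|a ch] wf_t deg_t.
rewrite add0n -(sum_htilde_Vstar wf_t isT) sumnE big_map.
have Vstar_t : all (predI (wf ar) (fun y => (deg y).+1 == deg (Node a ch)))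
                   (Vstar (Node a ch)).
  by rewrite all_predI wf_Vstar // deg_Vstar.
apply: eq_big_all Vstar_t _ => y /andP[wf_y /eqP deg_y].
by apply: IHn; rewrite // -ltnS deg_y.
Qed.
End Trees.

Theorem proposition2p6 (G : finType) (ar : G -> nat)
    (ar_pos : forall a : G, 0 < ar a) (t : tree G) :
  wf ar t -> hook t = htilde t.
Proof. by move=> wf_t; apply: hookF_htilde. Qed.
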